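(* For every integer $i \ge 0$ and every integer $\nu \ge 0$, the following two identities hold: \[ \sum_{k=0}^{2\nu} (-1)^{k}\, \binom{2\nu+i}{k+i}\, 2^{-k}\, \binom{2k}{k} =\pi\,(2\nu+1)_{i}\,\frac{2^{2i}\, i!}{(2i)!}\,\sum_{r=0}^{i}\frac{2^{-r}\,\binom{i}{r}\, \left(\tfrac12+\tfrac12(i-r)\right)_{\nu}}{(i-r)!\,\Gamma^{2}\!\left(\tfrac12+\tfrac12(r-i)\right)\,\left(1+\tfrac12(i-r)\right)_{\nu}} \] and \[ \sum_{k=0}^{2\nu+1} (-1)^{k}\, \binom{2\nu+1+i}{k+i}\, 2^{-k}\, \binom{2k}{k} =2\pi\,(2\nu+2)_{i}\,\frac{2^{2i}\, i!}{(2i)!}\,\sum_{r=0}^{i}\frac{2^{-r}\,\binom{i}{r}\, \left(1+\tfrac12(i-r)\right)_{\nu}}{(i-r+1)!\,\Gamma^{2}\!\left(\tfrac12(r-i)\right)\,\left(\tfrac32+\tfrac12(i-r)\right)_{\nu}}. \]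
   Context: For a complex number $a$ and integer $n\ge 0$, $(a)_n$ denotes the Pochhammer symbol: $(a)_0=1$ and $(a)_n=a(a+1)\cdots(a+n-1)$ for $n\ge1$. $\Gamma$ is Euler's gamma function; whenever $\Gamma$ is evaluated at a non-positive integer in a denominator, the corresponding term is interpreted as $0$ (i.e. $1/\Gamma(-m)=0$ for integers $m\ge 0$). *)

From Stdlib Require Import Reals.
From Coquelicot Require Import Coquelicot.
Open Scope R_scope.

Fixpoint poch (a : R) (n : nat) : R :=
  match n with
  | O => 1
  | S m => poch a m * (a + INR m)
  end.

Definition Gamma_pos (x : R) : R :=
  RInt_gen (fun t => Rpower t (x - 1) * exp (- t))
           (at_right 0) (Rbar_locally p_infty).

(** Number of shifts needed so that x + shift x > 0. *)
Definition shift (x : R) : nat := Z.to_nat (up (- x)).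

(** Reciprocal Gamma function, entire: 1/Gamma(x) = (x)_N / Gamma(x+N) for
    any N with x + N > 0 (functional equation).  At non-positive integers
    this is 0, matching the paper's convention 1/Gamma(-m) = 0. *)
Definition rGamma (x : R) : R :=
  poch x (shift x) / Gamma_pos (x + INR (shift x)).

Definition binom (n k : nat) : R := Binomial.C n k.

Definition sum0 (f : nat -> R) (n : nat) : R := sum_f_R0 f n.

(* The left-hand sides are values of the moment functional L of the arcsine law,
   L(x^m) = C(m, m/2) / 2^m for even m and L(x^m) = 0 for odd m.  Since
   2^-k C(2k, k) = L((1 + x)^k), a double induction on n and i, driven by Pascal's
   rule and by (m + 2) L(x^(m+2)) = (m + 1) L(x^m), gives
     sum_k (-1)^k C(n+i, k+i) 2^-k C(2k, k) = C(n+i, i) 4^i / C(2i, i) * 2^-i L(x^n (1+x)^i).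
   Expanding (1 + x)^i turns the right-hand side into a combination of the moments
   L(x^(n+i-r)).  Once Gamma(1/2) = sqrt PI is known, an even moment L(x^(2 nu + 2 j)) is
   exactly the Pochhammer/Gamma expression of the statement, and the odd moments vanish
   where 1/Gamma vanishes at the non-positive integers.  Finally Gamma(1/2) = sqrt PI
   comes from the Gaussian integral through the classical identity
     (int_0^x e^(-t^2) dt)^2 + int_0^1 e^(-x^2 (1+t^2)) / (1+t^2) dt = PI / 4. *)

From Coquelicot Require Import Coquelicot.
From Stdlib Require Import Reals Factorial Lra Lia Znat.
Open Scope R_scope.

(** * Gamma(1/2) = sqrt PI *)

Lemma ex_derive_continuous_R (f : R -> R) x : ex_derive f x -> continuous f x.
Proof. apply (@ex_derive_continuous R_AbsRing R_NormedModule). Qed.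

Lemma ex_RInt_continuous_R (f : R -> R) a b :
  (forall x, Rmin a b <= x <= Rmax a b -> continuous f x) -> ex_RInt f a b.
Proof. apply (@ex_RInt_continuous R_CompleteNormedModule). Qed.

Definition gauss (x : R) : R := exp (- (x * x)).
Definition gauss_int (x : R) : R := RInt gauss 0 x.
Definition gauss_kernel (x t : R) : R := exp (- (x * x) * (1 + t * t)) / (1 + t * t).
Definition gauss_kernel_int (x : R) : R := RInt (gauss_kernel x) 0 1.

Lemma continuous_gauss x : continuous gauss x.
Proof. apply ex_derive_continuous_R. unfold gauss. auto_derive. easy. Qed.

Lemma ex_RInt_gauss a b : ex_RInt gauss a b.
Proof. apply ex_RInt_continuous_R. intros x _. apply continuous_gauss. Qed.

Lemma is_derive_gauss_int x : is_derive gauss_int x (gauss x).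
Proof.
  apply is_derive_RInt with (a := 0); [| apply continuous_gauss].
  apply filter_forall. intros b. apply (@RInt_correct R_CompleteNormedModule), ex_RInt_gauss.
Qed.

Lemma continuous_gauss_int x : continuous gauss_int x.
Proof. apply ex_derive_continuous_R. eexists. apply is_derive_gauss_int. Qed.

Lemma gauss_int_0 : gauss_int 0 = 0.
Proof. unfold gauss_int. rewrite RInt_point. reflexivity. Qed.

Lemma gauss_int_ge0 x : 0 <= x -> 0 <= gauss_int x.
Proof.
  intros Hx. apply RInt_ge_0; [exact Hx | apply ex_RInt_gauss |].
  intros t _. apply Rlt_le, exp_pos.
Qed.

Lemma gauss_int_rescale x : gauss_int x = RInt (fun t => x * gauss (x * t)) 0 1.
Proof.
  pose proof (@RInt_comp_lin R_CompleteNormedModule gauss x 0 0 1 (ex_RInt_gauss _ _)) as H.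
  rewrite Rmult_0_r, Rmult_1_r, !Rplus_0_r in H.
  unfold gauss_int. rewrite <- H. apply RInt_ext. intros t _. rewrite Rplus_0_r. reflexivity.
Qed.

Lemma ex_RInt_gauss_kernel x a b : ex_RInt (gauss_kernel x) a b.
Proof.
  apply ex_RInt_continuous_R. intros t _. apply ex_derive_continuous_R.
  unfold gauss_kernel. auto_derive. nra.
Qed.

Lemma is_derive_gauss_kernel x t :
  is_derive (fun u => gauss_kernel u t) x (-2 * x * exp (- (x * x) * (1 + t * t))).
Proof. unfold gauss_kernel. auto_derive; [nra | field; nra]. Qed.

Lemma continuity_2d_pt_gauss_kernel_deriv x t :
  continuity_2d_pt (fun u v => -2 * u * exp (- (u * u) * (1 + v * v))) x t.
Proof.
  apply continuity_2d_pt_mult.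
  - apply continuity_2d_pt_mult; [apply continuity_2d_pt_const | apply continuity_2d_pt_id1].
  - apply continuity_1d_2d_pt_comp with (f := exp) (g := fun u v => - (u * u) * (1 + v * v)).
    + apply derivable_continuous_pt, derivable_pt_exp.
    + apply continuity_2d_pt_mult.
      * apply continuity_2d_pt_opp, continuity_2d_pt_mult; apply continuity_2d_pt_id1.
      * apply continuity_2d_pt_plus; [apply continuity_2d_pt_const |].
        apply continuity_2d_pt_mult; apply continuity_2d_pt_id2.
Qed.

(* Differentiate under the integral sign, then rescale [gauss_int x] to an integral over [0, 1]. *)
Lemma is_derive_gauss_kernel_int x :
  is_derive gauss_kernel_int x (-2 * gauss x * gauss_int x).
Proof.
  assert (HD : forall u t, Derive (fun z => gauss_kernel z t) u
                          = -2 * u * exp (- (u * u) * (1 + t * t)))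
    by (intros; apply is_derive_unique, is_derive_gauss_kernel).
  replace (-2 * gauss x * gauss_int x)
    with (RInt (fun t => Derive (fun u => gauss_kernel u t) x) 0 1).
  - apply is_derive_RInt_param.
    + apply filter_forall. intros y t _. eexists. apply is_derive_gauss_kernel.
    + intros t _. eapply continuity_2d_pt_ext; [| apply continuity_2d_pt_gauss_kernel_deriv].
      intros; symmetry; apply HD.
    + apply filter_forall. intros y. apply ex_RInt_gauss_kernel.
  - rewrite gauss_int_rescale.
    change (-2 * gauss x * ?I) with (scal (-2 * gauss x) I).
    rewrite <- (@RInt_scal R_CompleteNormedModule).
    + apply RInt_ext. intros t _. rewrite HD. unfold gauss, scal; simpl; unfold mult; simpl.
      replace (- (x * x) * (1 + t * t)) with (- (x * x) + - (x * t * (x * t))) by ring.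
      rewrite exp_plus. ring.
    + apply ex_RInt_continuous_R. intros t _. apply ex_derive_continuous_R.
      unfold gauss. auto_derive. easy.
Qed.

Lemma gauss_kernel_int_0 : gauss_kernel_int 0 = PI / 4.
Proof.
  assert (H : is_RInt (fun t => / (1 + t ^ 2)) 0 1 (atan 1 - atan 0)).
  { apply (@is_RInt_derive R_CompleteNormedModule atan); intros t _.
    - apply is_derive_Reals, derivable_pt_lim_atan.
    - apply ex_derive_continuous_R. auto_derive. nra. }
  rewrite atan_1, atan_0, Rminus_0_r in H.
  unfold gauss_kernel_int. rewrite <- (is_RInt_unique _ _ _ _ H).
  apply RInt_ext. intros t _. unfold gauss_kernel.
  rewrite Rmult_0_r, Ropp_0, Rmult_0_l, exp_0. simpl. field. nra.
Qed.

(* The derivative of the left-hand side is 2 gauss x gauss_int x - 2 gauss x gauss_int x. *)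
Lemma gauss_int_sqr_add_kernel_int x : gauss_int x ^ 2 + gauss_kernel_int x = PI / 4.
Proof.
  set (F := fun y => gauss_int y ^ 2 + gauss_kernel_int y).
  assert (HF : forall y, is_derive F y 0).
  { intros y.
    replace 0 with (plus (INR 2 * gauss y * gauss_int y ^ pred 2) (-2 * gauss y * gauss_int y))
      by (unfold plus; simpl; ring).
    apply (@is_derive_plus R_AbsRing R_NormedModule).
    - apply is_derive_pow, is_derive_gauss_int.
    - apply is_derive_gauss_kernel_int. }
  change (F x = PI / 4). rewrite <- gauss_kernel_int_0.
  replace (gauss_kernel_int 0) with (F 0) by (unfold F; rewrite gauss_int_0; simpl; ring).
  destruct (Rtotal_order 0 x) as [H | [<- | H]].
  - symmetry. apply eq_is_derive; auto.
  - reflexivity.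
  - apply eq_is_derive; auto.
Qed.

Lemma gauss_kernel_int_bounds x : 0 <= gauss_kernel_int x <= gauss x.
Proof.
  assert (Hk : forall t, 0 <= gauss_kernel x t <= gauss x).
  { intros t. unfold gauss_kernel, gauss.
    assert (He : exp (- (x * x) * (1 + t * t)) <= exp (- (x * x))).
    { destruct (Req_dec (x * x * (t * t)) 0) as [E | E].
      - right. f_equal. nra.
      - apply Rlt_le, exp_increasing. nra. }
    pose proof (exp_pos (- (x * x) * (1 + t * t))).
    split; [apply Rlt_le, Rdiv_lt_0_compat | apply Rle_div_l]; nra. }
  split.
  - apply RInt_ge_0; [lra | apply ex_RInt_gauss_kernel |]. intros t _. apply Hk.
  - rewrite <- (Rmult_1_l (gauss x)). replace 1 with (1 - 0) by ring.
    rewrite <- (@RInt_const R_CompleteNormedModule).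
    apply RInt_le; [lra | apply ex_RInt_gauss_kernel | apply ex_RInt_const |].
    intros t _. apply Hk.
Qed.

Lemma is_lim_gauss : is_lim gauss p_infty 0.
Proof.
  apply (is_lim_comp exp (fun x => - (x * x)) p_infty 0 m_infty).
  - apply is_lim_exp_m.
  - apply (is_lim_opp (fun x => x * x) p_infty p_infty).
    apply (is_lim_mult (fun x => x) (fun x => x) p_infty p_infty p_infty);
      try apply is_lim_id; simpl; auto.
  - exists 0. intros y _. discriminate.
Qed.

Lemma is_lim_gauss_kernel_int : is_lim gauss_kernel_int p_infty 0.
Proof.
  apply (is_lim_le_le_loc (fun _ => 0) gauss); [| apply is_lim_const | apply is_lim_gauss].
  exists 0. intros y _. apply gauss_kernel_int_bounds.
Qed.

Lemma is_lim_gauss_int : is_lim gauss_int p_infty (sqrt PI / 2).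
Proof.
  apply (is_lim_ext_loc (fun x => sqrt (PI / 4 - gauss_kernel_int x))).
  - exists 0. intros x Hx. rewrite <- (gauss_int_sqr_add_kernel_int x).
    replace (gauss_int x ^ 2 + gauss_kernel_int x - gauss_kernel_int x)
      with (gauss_int x ^ 2) by ring.
    apply sqrt_pow2, gauss_int_ge0. lra.
  - replace (sqrt PI / 2) with (sqrt (PI / 4 - 0)).
    + apply (is_lim_comp_continuous (fun x => PI / 4 - gauss_kernel_int x) sqrt);
        [| apply continuous_sqrt].
      apply (is_lim_minus _ _ _ (PI / 4) 0 (PI / 4 - 0));
        [apply is_lim_const | apply is_lim_gauss_kernel_int | reflexivity].
    + rewrite Rminus_0_r, sqrt_div_alt by lra.
      replace 4 with (2 ^ 2) by ring. rewrite sqrt_pow2 by lra. reflexivity.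
Qed.

Lemma is_lim_gauss_int_sqrt : is_lim (fun x => gauss_int (sqrt x)) p_infty (sqrt PI / 2).
Proof.
  apply (is_lim_comp gauss_int sqrt p_infty (sqrt PI / 2) p_infty).
  - apply is_lim_gauss_int.
  - apply filterlim_sqrt_p.
  - exists 0. intros y _. discriminate.
Qed.

Lemma filterlim_gauss_int_sqrt_at_right_0 :
  filterlim (fun x => gauss_int (sqrt x)) (at_right 0) (locally 0).
Proof.
  pose proof (continuous_comp sqrt gauss_int 0 (continuous_sqrt 0) (continuous_gauss_int _))
    as H.
  unfold continuous in H. rewrite sqrt_0, gauss_int_0 in H.
  apply (filterlim_filter_le_1 (F := locally 0)); [apply filter_le_within | exact H].
Qed.

(* The substitution t = u ^ 2 turns the integrand of Gamma(1/2) into 2 gauss u. *)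
Lemma is_RInt_Gamma_half_integrand a b : 0 < a <= b ->
  is_RInt (fun t => Rpower t (/ 2 - 1) * exp (- t)) a b
          (2 * (gauss_int (sqrt b) - gauss_int (sqrt a))).
Proof.
  intros Hab.
  apply (is_RInt_ext (fun t => gauss (sqrt t) / sqrt t)).
  - intros t Ht. rewrite Rmin_left, Rmax_right in Ht by lra.
    unfold gauss. rewrite sqrt_sqrt by lra.
    replace (/ 2 - 1) with (- / 2) by field.
    rewrite Rpower_Ropp, Rpower_sqrt by lra. simpl. unfold Rdiv. ring.
  - replace (2 * (gauss_int (sqrt b) - gauss_int (sqrt a)))
      with (minus (2 * gauss_int (sqrt b)) (2 * gauss_int (sqrt a)))
      by (unfold minus, plus, opp; simpl; ring).
    apply (@is_RInt_derive R_CompleteNormedModule (fun t => 2 * gauss_int (sqrt t)));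
      intros t Ht; rewrite Rmin_left, Rmax_right in Ht by lra;
      assert (Hs : 0 < sqrt t) by (apply sqrt_lt_R0; lra).
    + replace (gauss (sqrt t) / sqrt t) with (2 * (/ (2 * sqrt t) * gauss (sqrt t)))
        by (field; lra).
      apply is_derive_scal, (is_derive_comp gauss_int sqrt); [apply is_derive_gauss_int |].
      apply is_derive_Reals, derivable_pt_lim_sqrt. lra.
    + apply ex_derive_continuous_R. unfold gauss. auto_derive. repeat split; lra.
Qed.

Lemma filterlim_double_sub u v :
  filterlim (fun z : R * R => 2 * (fst z - snd z))
            (filter_prod (locally u) (locally v)) (locally (2 * (u - v))).
Proof.
  assert (Hc : continuity_2d_pt (fun x y => 2 * (x - y)) u v).
  { apply continuity_2d_pt_mult; [apply continuity_2d_pt_const |].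
    apply continuity_2d_pt_minus; [apply continuity_2d_pt_id1 | apply continuity_2d_pt_id2]. }
  apply (filterlim_filter_le_1 (F := locally (u, v))).
  - intros P [eps HP]. exists (ball u eps) (ball v eps); try apply locally_ball.
    intros x y Hx Hy. apply HP. split; assumption.
  - exact (proj1 (continuity_2d_pt_filterlim _ _ _) Hc).
Qed.

Lemma Gamma_pos_half : Gamma_pos (/ 2) = sqrt PI.
Proof.
  apply is_RInt_gen_unique.
  apply (filterlimi_lim_ext_loc
           (fun ab => 2 * (gauss_int (sqrt (snd ab)) - gauss_int (sqrt (fst ab))))).
  - exists (fun a => 0 < a < 1) (fun b => 1 < b).
    + exists (mkposreal 1 Rlt_0_1). intros y Hy Hy0.
      apply Rabs_lt_between' in Hy. simpl in Hy. lra.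
    + exists 1. auto.
    + intros a b Ha Hb. simpl. apply is_RInt_Gamma_half_integrand. lra.
  - replace (sqrt PI) with (2 * (sqrt PI / 2 - 0)) by field.
    apply (filterlim_comp_2 (G := locally (sqrt PI / 2)) (H := locally 0) _ _
             (fun u v => 2 * (u - v))); [| | apply filterlim_double_sub].
    + apply (filterlim_comp _ _ _ snd (fun b => gauss_int (sqrt b)) _ _ _ filterlim_snd).
      apply is_lim_gauss_int_sqrt.
    + apply (filterlim_comp _ _ _ fst (fun a => gauss_int (sqrt a)) _ _ _ filterlim_fst).
      apply filterlim_gauss_int_sqrt_at_right_0.
Qed.

(** * Moments of the arcsine law *)

(* Unlike [Binomial.C], which is junk for k > n, this vanishes there. *)
Fixpoint chooseR (n k : nat) : R :=
  match n, k with
  | _, O => 1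
  | O, S _ => 0
  | S n', S k' => chooseR n' k' + chooseR n' (S k')
  end.

Lemma chooseR_0 n : chooseR n 0 = 1.
Proof. destruct n; reflexivity. Qed.

Lemma chooseR_S n k : chooseR (S n) (S k) = chooseR n k + chooseR n (S k).
Proof. reflexivity. Qed.

Lemma chooseR_gt n k : (n < k)%nat -> chooseR n k = 0.
Proof.
  revert k; induction n; intros k Hk; destruct k; try lia; [reflexivity |].
  rewrite chooseR_S, !IHn by lia. ring.
Qed.

Lemma chooseR_diag n : chooseR n n = 1.
Proof. induction n; [reflexivity |]. rewrite chooseR_S, IHn, chooseR_gt by lia. ring. Qed.

Lemma binom_0_r n : Binomial.C n 0 = 1.
Proof.
  unfold Binomial.C. rewrite Nat.sub_0_r, Rmult_1_l.
  unfold Rdiv. apply Rinv_r, INR_fact_neq_0.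
Qed.

Lemma chooseR_binom n k : (k <= n)%nat -> chooseR n k = binom n k.
Proof.
  unfold binom. revert k; induction n; intros k Hk.
  - replace k with 0%nat by lia. rewrite binom_0_r. reflexivity.
  - destruct k; [rewrite chooseR_0, binom_0_r; reflexivity |].
    rewrite chooseR_S. destruct (Nat.eq_dec k n) as [-> | Hkn].
    + rewrite (chooseR_gt n (S n)), chooseR_diag, pascal_step1, Nat.sub_diag, binom_0_r
        by lia.
      ring.
    + rewrite !IHn by lia. apply pascal. lia.
Qed.

Lemma chooseR_absorb n k : chooseR (S n) (S k) = INR (S n) / INR (S k) * chooseR n k.
Proof.
  destruct (Compare_dec.le_lt_dec k n) as [Hk | Hk].
  - rewrite !chooseR_binom by lia. unfold binom, Binomial.C.
    replace (S n - S k)%nat with (n - k)%nat by lia.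
    rewrite !fact_simpl, !mult_INR. field.
    repeat split; try apply INR_fact_neq_0; apply not_0_INR; lia.
  - rewrite !chooseR_gt by lia. ring.
Qed.

Lemma chooseR_succ_r n k : chooseR (n + S k) (S k) = INR (S n) / INR (S k) * chooseR (n + S k) k.
Proof.
  rewrite !chooseR_binom by lia. unfold binom, Binomial.C.
  replace (n + S k - S k)%nat with n by lia.
  replace (n + S k - k)%nat with (S n) by lia.
  rewrite !fact_simpl, !mult_INR. field.
  repeat split; try apply INR_fact_neq_0; apply not_0_INR; lia.
Qed.

Fixpoint central (k : nat) : R :=
  match k with
  | O => 1
  | S k' => central k' * (2 * INR k' + 1) / (2 * INR k' + 2)
  end.

Lemma central_S k : central (S k) = central k * (2 * INR k + 1) / (2 * INR k + 2).
Proof. reflexivity. Qed.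

Lemma central_pos k : 0 < central k.
Proof.
  induction k as [| k IHk]; [simpl; lra |].
  pose proof (pos_INR k). rewrite central_S.
  apply Rdiv_lt_0_compat; [apply Rmult_lt_0_compat |]; lra.
Qed.

Lemma fact_double_S k :
  INR (fact (2 * S k)) = INR (fact (2 * k)) * (2 * INR k + 1) * (2 * INR k + 2).
Proof.
  replace (2 * S k)%nat with (S (S (2 * k))) by lia.
  rewrite !fact_simpl, !mult_INR, !S_INR, mult_INR. simpl (INR 2). ring.
Qed.

Lemma fact_double k : INR (fact (2 * k)) = 4 ^ k * central k * INR (fact k) ^ 2.
Proof.
  induction k as [| k IHk]; [simpl; ring |].
  rewrite fact_double_S, IHk, fact_simpl, mult_INR, S_INR. simpl.
  field. pose proof (pos_INR k). lra.
Qed.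

Lemma binom_central k : binom (2 * k) k = 4 ^ k * central k.
Proof.
  unfold binom, Binomial.C. replace (2 * k - k)%nat with k by lia.
  rewrite fact_double. field. apply INR_fact_neq_0.
Qed.

(* [arcsine_moment m] is the m-th moment of the arcsine law, with density
   1 / (PI sqrt (1 - x^2)) on (-1, 1). *)
Fixpoint arcsine_moment (m : nat) : R :=
  match m with
  | O => 1
  | S O => 0
  | S (S m' as p) => arcsine_moment m' * INR p / INR (S p)
  end.

Lemma arcsine_moment_SS m :
  arcsine_moment (S (S m)) = arcsine_moment m * INR (S m) / INR (S (S m)).
Proof. reflexivity. Qed.

Lemma arcsine_moment_even k : arcsine_moment (2 * k) = central k.
Proof.
  induction k as [| k IHk]; [reflexivity |].
  replace (2 * S k)%nat with (S (S (2 * k))) by lia.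
  rewrite arcsine_moment_SS, IHk, central_S, !S_INR, mult_INR. simpl (INR 2).
  field. pose proof (pos_INR k). lra.
Qed.

Lemma arcsine_moment_odd k : arcsine_moment (S (2 * k)) = 0.
Proof.
  induction k as [| k IHk]; [reflexivity |].
  replace (S (2 * S k)) with (S (S (S (2 * k)))) by lia.
  rewrite arcsine_moment_SS, IHk. lra.
Qed.

Lemma arcsine_moment_sign m : (-1) ^ m * arcsine_moment m = arcsine_moment m.
Proof.
  destruct (Nat.Even_or_Odd m) as [[k ->] | [k ->]].
  - rewrite pow_1_even. ring.
  - rewrite Nat.add_1_r, arcsine_moment_odd. ring.
Qed.

(* [mixed_moment n j] is the arcsine moment of x^n (1 + x)^j. *)
Fixpoint mixed_moment (n j : nat) : R :=
  match j with
  | O => arcsine_moment n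
  | S j' => mixed_moment n j' + mixed_moment (S n) j'
  end.

Lemma mixed_moment_rec j n :
  (INR n + INR j + 2) * mixed_moment (S (S n)) j
  = (INR n + 1) * mixed_moment n j + INR j * mixed_moment (S n) j.
Proof.
  revert n; induction j as [| j IHj]; intros n.
  - cbn [mixed_moment]. rewrite arcsine_moment_SS, !S_INR. simpl (INR 0).
    field. pose proof (pos_INR n). lra.
  - cbn [mixed_moment]. pose proof (IHj n). pose proof (IHj (S n)).
    rewrite !S_INR in *. lra.
Qed.

Lemma mixed_moment_step n i :
  (INR n + INR i + 2) * mixed_moment (S n) (S i)
  = (INR n + 1) * mixed_moment n (S i) + (2 * INR i + 1) * mixed_moment (S n) i.
Proof. cbn [mixed_moment]. pose proof (mixed_moment_rec i n). lra. Qed.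

Lemma mixed_moment_0_l i : mixed_moment 0 i = 2 ^ i * central i.
Proof.
  assert (H1 : forall j, (INR j + 1) * mixed_moment 1 j = INR j * mixed_moment 0 j).
  { induction j as [| j IHj]; [simpl; ring |].
    cbn [mixed_moment]. pose proof (mixed_moment_rec j 0).
    rewrite !S_INR in *. simpl (INR 0) in *. lra. }
  induction i as [| i IHi]; [simpl; ring |].
  pose proof (H1 i) as H. pose proof (pos_INR i).
  cbn [mixed_moment]. rewrite central_S, <- tech_pow_Rmult.
  replace (mixed_moment 1 i) with (INR i * mixed_moment 0 i / (INR i + 1))
    by (rewrite <- H; field; lra).
  rewrite IHi. field. lra.
Qed.

Lemma sum_f_R0_shift (f : nat -> R) n :
  sum_f_R0 (fun k => f (S k)) n = sum_f_R0 f (S n) - f 0%nat.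
Proof. rewrite (decomp_sum f (S n)) by lia. simpl pred. ring. Qed.

Lemma mixed_moment_expand i n :
  mixed_moment n i = sum_f_R0 (fun r => chooseR i r * arcsine_moment (n + (i - r))) i.
Proof.
  revert n; induction i as [| i IHi]; intros n.
  - simpl. rewrite Nat.add_0_r. ring.
  - cbn [mixed_moment]. rewrite (IHi n), (IHi (S n)).
    rewrite (decomp_sum _ (S i)) by lia. simpl pred. rewrite chooseR_0, Nat.sub_0_r.
    rewrite (sum_eq (fun r => chooseR (S i) (S r) * arcsine_moment (n + (S i - S r)))
                    (fun r => chooseR i r * arcsine_moment (n + (i - r))
                              + chooseR i (S r) * arcsine_moment (S n + (i - S r)))).
    2:{ intros r Hr. rewrite chooseR_S, Nat.sub_succ.
        destruct (Nat.eq_dec r i) as [-> | Hri].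
        - rewrite (chooseR_gt i (S i)) by lia. ring.
        - replace (S n + (i - S r))%nat with (n + (i - r))%nat by lia. ring. }
    rewrite plus_sum, (sum_f_R0_shift (fun r => chooseR i r * arcsine_moment (S n + (i - r)))).
    rewrite tech5, (chooseR_gt i (S i)), chooseR_0, Nat.sub_0_r by lia.
    replace (S n + i)%nat with (n + S i)%nat by lia. ring.
Qed.

(* The arcsine moment of x^m (1 - (1 + x))^n, with (1 - (1 + x))^n expanded binomially. *)
Lemma alt_sum_mixed_moment n m :
  sum_f_R0 (fun k => (-1) ^ k * chooseR n k * mixed_moment m k) n
  = (-1) ^ n * arcsine_moment (m + n).
Proof.
  revert m; induction n as [| n IHn]; intros m.
  - simpl. rewrite Nat.add_0_r. ring.
  - rewrite (decomp_sum _ (S n)) by lia. simpl pred.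
    set (g := fun j k => (-1) ^ k * chooseR n k * mixed_moment j k).
    rewrite (sum_eq _ (fun k => (g m (S k) - g m k) - g (S m) k)).
    2:{ intros k _. unfold g. rewrite chooseR_S. cbn [mixed_moment pow]. ring. }
    rewrite !minus_sum, sum_f_R0_shift, tech5. unfold g.
    rewrite (IHn (S m)), (chooseR_gt n (S n)), !chooseR_0 by lia.
    replace (S m + n)%nat with (m + S n)%nat by lia.
    cbn [pow mixed_moment]. ring.
Qed.

Definition tail_sum (n i : nat) : R :=
  sum_f_R0 (fun k => (-1) ^ k * chooseR (n + i) (k + i) * mixed_moment 0 k) n.

Lemma tail_sum_0_l i : tail_sum 0 i = 1.
Proof. unfold tail_sum. simpl. rewrite chooseR_diag. ring. Qed.

Lemma tail_sum_0_r n : tail_sum n 0 = arcsine_moment n.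
Proof.
  unfold tail_sum. rewrite <- arcsine_moment_sign.
  change (arcsine_moment n) with (arcsine_moment (0 + n)). rewrite <- alt_sum_mixed_moment.
  apply sum_eq. intros k _. rewrite !Nat.add_0_r. reflexivity.
Qed.

Lemma tail_sum_S n i : tail_sum (S n) (S i) = tail_sum n (S i) + tail_sum (S n) i.
Proof.
  unfold tail_sum.
  rewrite (sum_eq _ (fun k => (-1) ^ k * chooseR (S n + i) (k + i) * mixed_moment 0 k
                            + (-1) ^ k * chooseR (n + S i) (k + S i) * mixed_moment 0 k)).
  - rewrite plus_sum, (tech5 (fun k => (-1) ^ k * chooseR (n + S i) (k + S i) * _)).
    rewrite (chooseR_gt (n + S i) (S n + S i)) by lia. ring.
  - intros k _. replace (S n + S i)%nat with (S (S n + i)) by lia.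
    replace (k + S i)%nat with (S (k + i)) by lia.
    rewrite chooseR_S. replace (S n + i)%nat with (n + S i)%nat by lia. ring.
Qed.

(* Induction on n, then on i: [tail_sum_S] on the left matches [mixed_moment_step] on the right. *)
Lemma tail_sum_mul_central n i :
  tail_sum n i * (2 ^ i * central i) = chooseR (n + i) i * mixed_moment n i.
Proof.
  revert i; induction n as [| n IHn]; intros i.
  { rewrite tail_sum_0_l, mixed_moment_0_l, chooseR_diag. ring. }
  induction i as [| i IHi].
  { rewrite tail_sum_0_r, chooseR_0. simpl. ring. }
  pose proof (pos_INR n). pose proof (pos_INR i).
  rewrite tail_sum_S, Rmult_plus_distr_r, (IHn (S i)).
  replace (tail_sum (S n) i * (2 ^ S i * central (S i)))
    with (tail_sum (S n) i * (2 ^ i * central i) * ((2 * INR i + 1) / (INR i + 1)))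
    by (rewrite central_S, <- tech_pow_Rmult; field; lra).
  rewrite IHi. replace (S n + i)%nat with (n + S i)%nat by lia.
  rewrite chooseR_succ_r, (chooseR_absorb (n + S i)), !S_INR, plus_INR, S_INR.
  transitivity (chooseR (n + S i) i / (INR i + 1)
                * ((INR n + INR i + 2) * mixed_moment (S n) (S i))).
  - rewrite mixed_moment_step. field. lra.
  - field. lra.
Qed.

(** * Pochhammer symbols and 1/Gamma at half-integers *)

Lemma poch_S a k : poch a (S k) = poch a k * (a + INR k).
Proof. reflexivity. Qed.

Lemma poch_succ_l a k : poch a (S k) = a * poch (a + 1) k.
Proof.
  induction k as [| k IHk]; [simpl; ring |].
  rewrite poch_S, IHk, poch_S, S_INR. ring.
Qed.

Lemma poch_pos a k : 0 < a -> 0 < poch a k.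
Proof.
  intros Ha. induction k as [| k IHk]; [simpl; lra |].
  pose proof (pos_INR k). rewrite poch_S. apply Rmult_lt_0_compat; lra.
Qed.

Lemma poch_INR a i : poch (INR (S a)) i * INR (fact a) = INR (fact (a + i)).
Proof.
  induction i as [| i IHi]; [simpl; rewrite Nat.add_0_r; ring |].
  replace (a + S i)%nat with (S (a + i)) by lia.
  rewrite poch_S, fact_simpl, mult_INR, <- IHi, !S_INR, plus_INR. ring.
Qed.

Lemma poch_half_sub_sqr j : 4 ^ j * poch (/ 2 - INR j) j ^ 2 = central j * INR (fact (2 * j)).
Proof.
  induction j as [| j IHj]; [simpl; ring |].
  rewrite poch_succ_l, fact_double_S, S_INR.
  replace (/ 2 - (INR j + 1) + 1) with (/ 2 - INR j) by ring.
  replace (4 ^ S j * ((/ 2 - (INR j + 1)) * poch (/ 2 - INR j) j) ^ 2)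
    with (4 ^ j * poch (/ 2 - INR j) j ^ 2 * (2 * INR j + 1) ^ 2) by (simpl; field).
  rewrite IHj, central_S. field. pose proof (pos_INR j). lra.
Qed.

Lemma poch_half_central j nu :
  poch (/ 2 + INR j) nu * central j = poch (1 + INR j) nu * central (nu + j).
Proof.
  pose proof (pos_INR j).
  induction nu as [| nu IHnu]; [simpl; ring |].
  rewrite !poch_S, Nat.add_succ_l, central_S, plus_INR.
  replace (poch (/ 2 + INR j) nu * (/ 2 + INR j + INR nu) * central j)
    with (poch (/ 2 + INR j) nu * central j * (/ 2 + INR j + INR nu)) by ring.
  rewrite IHnu. field. pose proof (pos_INR nu). lra.
Qed.

Lemma shift_spec x j : - x < INR j <= - x + 1 -> shift x = j.
Proof.
  intros [H1 H2]. unfold shift. rewrite INR_IZR_INZ in H1, H2.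
  rewrite <- (tech_up _ _ H1 H2). apply Nat2Z.id.
Qed.

Lemma rGamma_half_sub_INR j : rGamma (/ 2 - INR j) = poch (/ 2 - INR j) j / sqrt PI.
Proof.
  unfold rGamma. rewrite (shift_spec _ j) by lra.
  replace (/ 2 - INR j + INR j) with (/ 2) by ring. rewrite Gamma_pos_half. reflexivity.
Qed.

Lemma rGamma_opp_INR j : rGamma (- INR j) = 0.
Proof.
  unfold rGamma. rewrite (shift_spec _ (S j)) by (rewrite S_INR; lra).
  rewrite poch_S. replace (- INR j + INR j) with 0 by ring. unfold Rdiv. ring.
Qed.

Lemma arcsine_moment_even_rGamma c j nu :
  PI * (c * poch (/ 2 + INR j) nu / INR (fact (2 * j)) * rGamma (/ 2 - INR j) ^ 2
        / poch (1 + INR j) nu)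
  = c * arcsine_moment (2 * (nu + j)) / 4 ^ j.
Proof.
  assert (Hpi : sqrt PI ^ 2 = PI) by (apply pow2_sqrt; pose proof PI_RGT_0; lra).
  assert (Hs : 0 < sqrt PI) by (apply sqrt_lt_R0, PI_RGT_0).
  assert (Hp : 0 < poch (1 + INR j) nu) by (apply poch_pos; pose proof (pos_INR j); lra).
  assert (H4 : 0 < 4 ^ j) by (apply pow_lt; lra).
  pose proof (central_pos j). pose proof (INR_fact_neq_0 (2 * j)) as Hf.
  rewrite rGamma_half_sub_INR, arcsine_moment_even.
  set (s := sqrt PI) in *. set (f := INR (fact (2 * j))) in *. rewrite <- Hpi.
  replace (s ^ 2 * (c * poch (/ 2 + INR j) nu / f * (poch (/ 2 - INR j) j / s) ^ 2
                    / poch (1 + INR j) nu))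
    with (c * (poch (/ 2 + INR j) nu * central j) * (4 ^ j * poch (/ 2 - INR j) j ^ 2)
          / (f * central j * 4 ^ j * poch (1 + INR j) nu)) by (field; lra).
  rewrite poch_half_central, poch_half_sub_sqr. fold f. field. lra.
Qed.

Lemma pow2_split r i : (r <= i)%nat -> 2 ^ i = 2 ^ r * 2 ^ (i - r).
Proof. intros Hr. rewrite <- pow_add. f_equal. lia. Qed.

Lemma INR_sub_opp r i : (r <= i)%nat -> INR r - INR i = - INR (i - r).
Proof. intros Hr. rewrite minus_INR by exact Hr. ring. Qed.

Lemma first_rhs_summand nu i r : (r <= i)%nat ->
  PI * (/ 2 ^ r * binom i r * poch (/ 2 + / 2 * INR (i - r)) nu / INR (fact (i - r))
        * rGamma (/ 2 + / 2 * (INR r - INR i)) ^ 2 / poch (1 + / 2 * INR (i - r)) nu)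
  = chooseR i r / 2 ^ i * arcsine_moment (2 * nu + (i - r)).
Proof.
  intros Hr. rewrite <- chooseR_binom, INR_sub_opp, (pow2_split r i) by exact Hr.
  assert (H2r : 2 ^ r <> 0) by (apply pow_nonzero; lra).
  destruct (Nat.Even_or_Odd (i - r)) as [[j Hj] | [j Hj]]; rewrite Hj.
  - replace (/ 2 * INR (2 * j)) with (INR j) by (rewrite mult_INR; simpl; field).
    replace (/ 2 + / 2 * - INR (2 * j)) with (/ 2 - INR j) by (rewrite mult_INR; simpl; field).
    replace (2 * nu + 2 * j)%nat with (2 * (nu + j))%nat by lia.
    rewrite arcsine_moment_even_rGamma, pow_mult. replace (2 ^ 2) with 4 by ring.
    field. split; [apply pow_nonzero; lra | exact H2r].
  - replace (/ 2 + / 2 * - INR (2 * j + 1)) with (- INR j)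
      by (rewrite plus_INR, mult_INR; simpl; field).
    replace (2 * nu + (2 * j + 1))%nat with (S (2 * (nu + j))) by lia.
    rewrite rGamma_opp_INR, arcsine_moment_odd. unfold Rdiv. ring.
Qed.

Lemma second_rhs_summand nu i r : (r <= i)%nat ->
  2 * PI * (/ 2 ^ r * binom i r * poch (1 + / 2 * INR (i - r)) nu / INR (fact (i - r + 1))
            * rGamma (/ 2 * (INR r - INR i)) ^ 2 / poch (3 / 2 + / 2 * INR (i - r)) nu)
  = chooseR i r / 2 ^ i * arcsine_moment (2 * nu + 1 + (i - r)).
Proof.
  intros Hr. rewrite <- chooseR_binom, INR_sub_opp, (pow2_split r i) by exact Hr.
  assert (H2r : 2 ^ r <> 0) by (apply pow_nonzero; lra).
  destruct (Nat.Even_or_Odd (i - r)) as [[j Hj] | [j Hj]]; rewrite Hj.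
  - replace (/ 2 * - INR (2 * j)) with (- INR j) by (rewrite mult_INR; simpl; field).
    replace (2 * nu + 1 + 2 * j)%nat with (S (2 * (nu + j))) by lia.
    rewrite rGamma_opp_INR, arcsine_moment_odd. unfold Rdiv. ring.
  - replace (/ 2 * - INR (2 * j + 1)) with (/ 2 - INR (S j))
      by (rewrite plus_INR, mult_INR, S_INR; simpl; field).
    replace (1 + / 2 * INR (2 * j + 1)) with (/ 2 + INR (S j))
      by (rewrite plus_INR, mult_INR, S_INR; simpl; field).
    replace (3 / 2 + / 2 * INR (2 * j + 1)) with (1 + INR (S j))
      by (rewrite plus_INR, mult_INR, S_INR; simpl; field).
    replace (2 * j + 1 + 1)%nat with (2 * S j)%nat by lia.
    replace (2 * nu + 1 + (2 * j + 1))%nat with (2 * (nu + S j))%nat by lia.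
    rewrite Rmult_assoc, arcsine_moment_even_rGamma, pow_add, pow_mult, <- tech_pow_Rmult.
    replace (2 ^ 2) with 4 by ring.
    field. split; [apply pow_nonzero; lra | exact H2r].
Qed.

Lemma lhs_eq_tail_sum n i :
  sum0 (fun k => (-1) ^ k * binom (n + i) (k + i) * / 2 ^ k * binom (2 * k) k) n
  = tail_sum n i.
Proof.
  apply sum_eq. intros k Hk.
  rewrite <- chooseR_binom, binom_central, mixed_moment_0_l by lia.
  replace 4 with (2 * 2) by ring. rewrite Rpow_mult_distr.
  field. apply pow_nonzero. lra.
Qed.

Lemma poch_coef_eq_chooseR n i :
  poch (INR (S n)) i * (2 ^ (2 * i) * INR (fact i) / INR (fact (2 * i)))
  = chooseR (n + i) i / central i.
Proof.
  rewrite chooseR_binom by lia. unfold binom, Binomial.C.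
  replace (n + i - i)%nat with n by lia.
  rewrite <- poch_INR, fact_double, pow_mult. replace (2 ^ 2) with 4 by ring.
  pose proof (central_pos i). pose proof (INR_fact_neq_0 i). pose proof (INR_fact_neq_0 n).
  field. repeat split; try lra; auto; apply pow_nonzero; lra.
Qed.

Lemma lhs_closed_form n i :
  sum0 (fun k => (-1) ^ k * binom (n + i) (k + i) * / 2 ^ k * binom (2 * k) k) n
  = poch (INR (S n)) i * (2 ^ (2 * i) * INR (fact i) / INR (fact (2 * i)))
    * sum0 (fun r => chooseR i r / 2 ^ i * arcsine_moment (n + (i - r))) i.
Proof.
  rewrite lhs_eq_tail_sum, poch_coef_eq_chooseR. unfold sum0.
  rewrite (sum_eq _ (fun r => chooseR i r * arcsine_moment (n + (i - r)) * / 2 ^ i))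
    by (intros; unfold Rdiv; ring).
  rewrite <- scal_sum, <- mixed_moment_expand.
  pose proof (central_pos i). assert (H2 : 0 < 2 ^ i) by (apply pow_lt; lra).
  apply (Rmult_eq_reg_r (2 ^ i * central i)); [| nra].
  rewrite tail_sum_mul_central. field. lra.
Qed.

Lemma sum0_mul_ext c f g n :
  (forall r, (r <= n)%nat -> c * f r = g r) -> sum0 g n = c * sum0 f n.
Proof.
  intros H. unfold sum0. rewrite scal_sum. apply sum_eq. intros r Hr.
  rewrite <- H by exact Hr. ring.
Qed.

Theorem theorem2p1 (i nu : nat) :
  sum0 (fun k => (-1) ^ k * binom (2 * nu + i) (k + i) * / 2 ^ k * binom (2 * k) k)
       (2 * nu)
  = PI * poch (INR (2 * nu + 1)) i * (2 ^ (2 * i) * INR (fact i) / INR (fact (2 * i)))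
    * sum0 (fun r => / 2 ^ r * binom i r
                     * poch (/ 2 + / 2 * INR (i - r)) nu
                     / INR (fact (i - r))
                     * rGamma (/ 2 + / 2 * (INR r - INR i)) ^ 2
                     / poch (1 + / 2 * INR (i - r)) nu) i
  /\
  sum0 (fun k => (-1) ^ k * binom (2 * nu + 1 + i) (k + i) * / 2 ^ k * binom (2 * k) k)
       (2 * nu + 1)
  = 2 * PI * poch (INR (2 * nu + 2)) i * (2 ^ (2 * i) * INR (fact i) / INR (fact (2 * i)))
    * sum0 (fun r => / 2 ^ r * binom i r
                     * poch (1 + / 2 * INR (i - r)) nu
                     / INR (fact (i - r + 1))
                     * rGamma (/ 2 * (INR r - INR i)) ^ 2
                     / poch (3 / 2 + / 2 * INR (i - r)) nu) i.
Proof.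
  split.
  - rewrite lhs_closed_form, (sum0_mul_ext _ _ _ _ (first_rhs_summand nu i)), Nat.add_1_r.
    ring.
  - rewrite lhs_closed_form, (sum0_mul_ext _ _ _ _ (second_rhs_summand nu i)).
    replace (2 * nu + 2)%nat with (S (2 * nu + 1)) by lia. ring.
Qed.
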